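(* For every positive integer $n$, the fan $F_{3n}$ has a vertex-minor isomorphic to a cycle of length $2n+1$.
   Context: Graphs are finite, simple, undirected. The fan $F_m$ is the graph on $m$ vertices with a vertex $c$ (the center) such that $F_m\setminus c$ is a path on $m-1$ vertices and $c$ is adjacent to all other vertices. Local complementation $G*v$ complements the subgraph induced on the neighborhood of $v$; a vertex-minor of $G$ is an induced subgraph of a graph obtained from $G$ by a sequence of local complementations. *)

From mathcomp Require Import all_boot.
Set Implicit Arguments. Unset Strict Implicit. Unset Printing Implicit Defensive.

Definition simple_graph (T : finType) (G : rel T) : Prop :=
  symmetric G /\ irreflexive G.

Definition local_comp (T : finType) (G : rel T) (v : T) : rel T :=
  fun x y => if [&& x != y, G v x & G v y] then ~~ G x y else G x y.

Definition local_comp_seq (T : finType) (G : rel T) (s : seq T) : rel T :=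
  foldl (@local_comp T) G s.

Definition iso_induced (U T : finType) (H : rel U) (G : rel T) : Prop :=
  exists f : U -> T, injective f /\ forall x y : U, H x y = G (f x) (f y).

Definition vertex_minor (U T : finType) (H : rel U) (G : rel T) : Prop :=
  exists s : seq T, iso_induced H (local_comp_seq G s).

(* The fan F_m on vertices 0..m-1: center 0, path 1 - 2 - ... - (m-1). *)
Definition fan (m : nat) : rel 'I_m :=
  fun x y => (x != y) &&
    [|| val x == 0, val y == 0, (val x).+1 == val y | (val y).+1 == val x].

Definition cycle_graph (k : nat) : rel 'I_k :=
  fun x y => (x != y) &&
    (((val x).+1 %% k == val y) || ((val y).+1 %% k == val x)).

Arguments fan m : clear implicits.
Arguments cycle_graph k : clear implicits.

(* Locally complementing the fan F_N at the path vertices 3, 6, ..., 3m removes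
   the edges from the centre to 3k-1 and 3k+1 and adds the chord 3k-1 -- 3k+1.
   With m = n - 1 and N = 3n, the vertices not divisible by 3 together with the
   centre then induce the cycle 0 - 1 - 2 - 4 - 5 - ... - (3n-2) - (3n-1) - 0. *)
From mathcomp Require Import all_boot zify.

Set Implicit Arguments.
Unset Strict Implicit.
Unset Printing Implicit Defensive.

Definition lcomp (T : eqType) (G : rel T) (v : T) : rel T :=
  fun x y => if [&& x != y, G v x & G v y] then ~~ G x y else G x y.

Lemma local_comp_map (T : finType) (S : eqType) (f : T -> S) (G : rel T) (H : rel S) :
  injective f -> (forall x y, G x y = H (f x) (f y)) ->
  forall v x y, local_comp G v x y = lcomp H (f v) (f x) (f y).
Proof. by move=> f_inj GH v x y; rewrite /local_comp /lcomp (inj_eq f_inj) !GH. Qed.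

(* The fan on nat, locally complemented at 3, 6, ..., 3m. *)
Definition center_adj m b := (0 < b) && [|| b %% 3 == 0, b == 1 | 3 * m + 1 < b].

Definition fan_lcomp_arc m a b :=
  [|| (a == 0) && center_adj m b, a.+1 == b | [&& a %% 3 == 2, b == a + 2 & a < 3 * m]].

Definition fan_lcomp m : rel nat :=
  fun a b => (a != b) && (fan_lcomp_arc m a b || fan_lcomp_arc m b a).

Lemma fan_lcomp0 N (x y : 'I_N) : fan N x y = fan_lcomp 0 x y.
Proof.
rewrite /fan /fan_lcomp /fan_lcomp_arc /center_adj -val_eqE /=.
move: (val x) (val y) => a b; lia.
Qed.

Lemma fan_lcomp_nbr m b :
  fan_lcomp m (3 * m.+1) b = [|| b == 0, b == 3 * m + 2 | b == 3 * m + 4].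
Proof.
rewrite /fan_lcomp /fan_lcomp_arc /center_adj.
have := divn_eq b 3; have := ltn_pmod b (isT : 0 < 3); lia.
Qed.

Lemma fan_lcomp_arcS m a b :
  ~~ ((a == 0) && ((b == 3 * m + 2) || (b == 3 * m + 4))) ->
  ~~ ((a == 3 * m + 2) && (b == 3 * m + 4)) ->
  fan_lcomp_arc m.+1 a b = fan_lcomp_arc m a b.
Proof.
rewrite /fan_lcomp_arc /center_adj.
have := divn_eq b 3; have := ltn_pmod b (isT : 0 < 3).
have := divn_eq a 3; have := ltn_pmod a (isT : 0 < 3).
move: (b %/ 3) (b %% 3) (a %/ 3) (a %% 3) => q r q' r'; lia.
Qed.

Lemma fan_lcompS m : fan_lcomp m.+1 =2 lcomp (fan_lcomp m) (3 * m.+1).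
Proof.
move=> a b; rewrite /lcomp !fan_lcomp_nbr.
case: ifPn => [/and3P[a_neq_b Na Nb] | not_both_nbrs].
  have mod32 : (3 * m + 2) %% 3 = 2 by rewrite -modnDml modnMr.
  have mod31 : (3 * m + 4) %% 3 = 1 by rewrite -modnDml modnMr.
  move: a_neq_b; rewrite /fan_lcomp /fan_lcomp_arc /center_adj.
  by case/or3P: Na => /eqP->; case/or3P: Nb => /eqP-> //=; rewrite ?mod32 ?mod31; lia.
by rewrite /fan_lcomp (@fan_lcomp_arcS m a b) 1?(@fan_lcomp_arcS m b a); lia.
Qed.

Lemma local_comp_seq_fan N (s : seq 'I_N) m :
  map val s = [seq 3 * k | k <- iota 1 m] ->
  forall x y, local_comp_seq (fan N) s x y = fan_lcomp m x y.
Proof.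
elim/last_ind: s m => [|s v IHs] [|m] //.
- by move=> _; exact: fan_lcomp0.
- by move/(congr1 size); rewrite size_map size_rcons.
rewrite -[m.+1]addn1 iotaD add1n cats1 !map_rcons addn1.
move=> /rcons_inj[/IHs IH v_val] x y.
rewrite /local_comp_seq foldl_rcons -/(local_comp_seq _ _).
by rewrite (local_comp_map val_inj IH) /= v_val fan_lcompS.
Qed.

Lemma exists_ord_seq N (l : seq nat) : all (fun k => k < N) l ->
  exists s : seq 'I_N, map val s = l.
Proof.
elim: l => [|k l IHl] /=; first by exists [::].
by case/andP=> k_lt /IHl[s <-]; exists (Ordinal k_lt :: s).
Qed.

(* Enumerates 0, 1, 2, 4, 5, 7, 8, ...: the centre, then the path vertices
   not divisible by 3. *)
Definition cycle_to_fan (i : nat) := i + i.-1 %/ 2.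

Lemma cycle_to_fan_lt n i : 0 < n -> i < 2 * n + 1 -> cycle_to_fan i < 3 * n.
Proof. rewrite /cycle_to_fan; lia. Qed.

Lemma cycle_to_fan_inj : injective cycle_to_fan.
Proof. move=> i j; rewrite /cycle_to_fan; lia. Qed.

Lemma cycle_to_fanE i : i = 0 /\ cycle_to_fan i = 0 \/
  exists j, i = 2 * j + 1 /\ cycle_to_fan i = 3 * j + 1 \/
            i = 2 * j + 2 /\ cycle_to_fan i = 3 * j + 2.
Proof.
case: i => [|i]; [by left | right].
by exists i./2; rewrite /cycle_to_fan /= -divn2; lia.
Qed.

Lemma eq_modS K x y : x < K -> y < K ->
  (x.+1 %% K == y) = (x.+1 == y) || (x.+1 == K) && (y == 0).
Proof.
move=> x_lt y_lt; case: (ltngtP x.+1 K) => [lt_xK | gt_xK | eq_xK].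
- by rewrite modn_small //; lia.
- lia.
- by rewrite eq_xK modnn; lia.
Qed.

Lemma cycle_graphE n (x y : 'I_(2 * n + 1)) : 0 < n ->
  cycle_graph (2 * n + 1) x y = fan_lcomp n.-1 (cycle_to_fan x) (cycle_to_fan y).
Proof.
move=> n_gt0; rewrite /cycle_graph -val_eqE /= !eq_modS //.
have mod3 j r : r < 3 -> (3 * j + r) %% 3 = r.
  by move=> r_lt; rewrite -modnDml modnMr modn_small.
move: (ltn_ord x) (ltn_ord y).
case: (cycle_to_fanE x) => [[-> ->] | [j [[-> ->] | [-> ->]]]];
case: (cycle_to_fanE y) => [[-> ->] | [k [[-> ->] | [-> ->]]]];
  rewrite /fan_lcomp /fan_lcomp_arc /center_adj ?mod3 //; lia.
Qed.

Theorem lemma4p2 (n : nat) (hn : 0 < n) :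
  vertex_minor (cycle_graph (2 * n + 1)) (fan (3 * n)).
Proof.
have [s s_val] : exists s : seq 'I_(3 * n), map val s = [seq 3 * k | k <- iota 1 n.-1].
  apply: exists_ord_seq; apply/allP => z /mapP[k]; rewrite mem_iota => k_range ->; lia.
have label_lt (i : 'I_(2 * n + 1)) : cycle_to_fan i < 3 * n.
  exact: cycle_to_fan_lt (ltn_ord i).
exists s, (fun i => Ordinal (label_lt i)); split.
- by move=> i j [/cycle_to_fan_inj /val_inj].
- by move=> x y; rewrite (local_comp_seq_fan s_val) cycle_graphE.
Qed.
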